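(* Suppose that Assumptions (A1) and (A2) hold. Then there is a constant $C>0$ depending only on $\alpha$, $\gamma$, the constants in (A1) and (A2), and $\|V\|_{L^\infty}$ (independent of $\epsilon\in(0,1]$) such that every solution $(u,m)$ of Problem 1 satisfies $\int_0^1 m\,dx\le C$.
   Context: Let $\mathbb{T}=\mathbb{R}/\mathbb{Z}$ be the one-dimensional torus; functions on $\mathbb{T}$ are identified with $1$-periodic functions on $\mathbb{R}$, and integrals over $\mathbb{T}$ are written $\int_0^1$. Let $H:\mathbb{R}\to\mathbb{R}$ be of class $C^2$, $V:\mathbb{T}\to\mathbb{R}$ continuous, $\alpha>0$, and $0<\epsilon\le 1$. We say $(u,m)$ solves Problem 1 if $u,m\in C^2(\mathbb{T})$, $m>0$ on $\mathbb{T}$, and on $\mathbb{T}$: $$u-u_{xx}+H(u_x)+V(x)=m^\alpha+\epsilon(m-m_{xx}),\qquad m-m_{xx}-(H'(u_x)m)_x=1-\epsilon(u-u_{xx}).$$ Assumptions: (A1) there exist constants $C_1,C_2,C_3>0$ and $\gamma>1$ such that $-C_1+C_2|p|^\gamma\le H(p)\le C_1+C_3|p|^\gamma$ for all $p\in\mathbb{R}$. (A2) There exist constants $\tilde C_1,\tilde C_2,\tilde C_3>0$ such that $-\tilde C_1+\tilde C_2|p|^\gamma\le pH'(p)-H(p)\le \tilde C_1+\tilde C_3|p|^\gamma$ for all $p$ (same $\gamma$ as in (A1)). *)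

From Stdlib Require Export Reals.
Open Scope R_scope.

Definition C2_with (f f' f'' : R -> R) : Prop :=
  (forall x, derivable_pt_lim f x (f' x)) /\
  (forall x, derivable_pt_lim f' x (f'' x)) /\
  continuity f''.

(* 1-periodic functions on R = functions on the torus T = R/Z. *)
Definition periodic1 (f : R -> R) : Prop := forall x, f (x + 1) = f x.

(* x^g for x >= 0 and g > 0, with the convention 0^g = 0
   (Stdlib's Rpower 0 g is 1, hence this wrapper). *)
Definition rpow (x g : R) : R := if Rle_dec x 0 then 0 else Rpower x g.

Definition is_sup_norm (V : R -> R) (Vb : R) : Prop :=
  is_lub (fun r => exists x, r = Rabs (V x)) Vb.

From Coquelicot Require Import Coquelicot.
From Stdlib Require Import Reals Lra.
Open Scope R_scope.

(* Integrating the Fokker-Planck equation over the torus gives the mass identity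
   ∫m + ε∫u = 1. Testing the Hamilton-Jacobi equation against m and the
   Fokker-Planck equation against u, i.e. integrating the derivative of the
   periodic function u (H'(u_x) m) - m u_x + m_x u + ε (m m_x + u u_x), and using
   (A2), m^α >= 0 and V <= ‖V‖∞, yields ε∫u² <= (C̃1 + ‖V‖∞)∫m + ∫u.
   Jensen's inequality (∫u)² <= ∫u² and the mass identity then give
   ∫m (∫m - 1) <= ε (C̃1 + ‖V‖∞) ∫m, hence ∫m <= 1 + C̃1 + ‖V‖∞. *)

Lemma derivable_pt_lim_eq_value f x l l' :
  derivable_pt_lim f x l -> l = l' -> derivable_pt_lim f x l'.
Proof. now intros ? <-. Qed.

Lemma derivable_pt_lim_continuity_pt f x l :
  derivable_pt_lim f x l -> continuity_pt f x.
Proof. intros Hf; exact (derivable_continuous_pt f x (exist _ l Hf)). Qed.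

Lemma is_RInt_eq_value (f : R -> R) a b v w :
  is_RInt f a b v -> v = w -> is_RInt f a b w.
Proof. now intros ? <-. Qed.

Lemma is_RInt_const_01 (c : R) : is_RInt (fun _ => c) 0 1 c.
Proof.
  eapply is_RInt_eq_value; [apply is_RInt_const|].
  unfold scal; simpl; unfold mult; simpl; ring.
Qed.

Ltac derive_rules :=
  repeat match goal with
  | h : forall x, derivable_pt_lim ?f x _ |- derivable_pt_lim ?f _ _ => apply h
  | |- derivable_pt_lim (fun _ => ?c) _ _ => apply (derivable_pt_lim_const c)
  | |- derivable_pt_lim (fun y => @?f y + @?g y) _ _ => apply (derivable_pt_lim_plus f g)
  | |- derivable_pt_lim (fun y => @?f y - @?g y) _ _ => apply (derivable_pt_lim_minus f g)
  | |- derivable_pt_lim (fun y => @?f y * @?g y) _ _ => apply (derivable_pt_lim_mult f g)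
  end.

Ltac continuity_rules :=
  repeat match goal with
  | h : forall x, continuity_pt ?f x |- continuity_pt ?f _ => apply h
  | h : forall x, derivable_pt_lim ?f x _ |- continuity_pt ?f _ =>
      eapply derivable_pt_lim_continuity_pt, h
  | |- continuity_pt (fun _ => ?c) _ => apply continuity_pt_const; intros ? ?; reflexivity
  | |- continuity_pt (fun y => @?f y + @?g y) _ => apply (continuity_pt_plus f g)
  | |- continuity_pt (fun y => @?f y - @?g y) _ => apply (continuity_pt_minus f g)
  | |- continuity_pt (fun y => @?f y * @?g y) _ => apply (continuity_pt_mult f g)
  end.

(* The rules dispatch on the syntax of the integrand: blindly trying e.g.
   [is_RInt_plus] on a product lets unification unfold [Rmult] and diverge. *)
Ltac RInt_rules :=
  repeat match goal with
  | h : is_RInt ?f _ _ _ |- is_RInt ?f _ _ _ => exact h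
  | |- is_RInt (fun _ => ?c) _ _ _ => apply is_RInt_const_01
  | |- is_RInt (fun y => ?k * @?f y) _ _ _ => apply (is_RInt_scal (V := R_NormedModule) f)
  | |- is_RInt (fun y => @?f y + @?g y) _ _ _ => apply (is_RInt_plus (V := R_NormedModule) f g)
  | |- is_RInt (fun y => @?f y - @?g y) _ _ _ => apply (is_RInt_minus (V := R_NormedModule) f g)
  | |- is_RInt (fun y => - @?f y) _ _ _ => apply (is_RInt_opp (V := R_NormedModule) f)
  end.

Lemma periodic1_derivative f f' :
  periodic1 f -> (forall x, derivable_pt_lim f x (f' x)) -> periodic1 f'.
Proof.
  intros f_per f_d x.
  assert (shift_d : derivable_pt_lim (comp f (fun y => y + 1)) x (f' (x + 1) * 1)).
  { apply derivable_pt_lim_comp; [|apply f_d].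
    eapply derivable_pt_lim_eq_value; [derive_rules; apply derivable_pt_lim_id | ring]. }
  rewrite Rmult_1_r in shift_d.
  apply (uniqueness_limite f x); [|apply f_d].
  eapply derivable_pt_lim_eq_value; [|reflexivity].
  unfold derivable_pt_lim in *; intros e e_pos.
  destruct (shift_d e e_pos) as [d Hd]; exists d; intros h h_nz h_small.
  specialize (Hd h h_nz h_small); unfold comp in Hd.
  now rewrite <- (f_per x), <- (f_per (x + h)).
Qed.

Lemma is_RInt_derivative_periodic1 F f :
  periodic1 F -> (forall x, derivable_pt_lim F x (f x)) ->
  (forall x, continuity_pt f x) -> is_RInt f 0 1 0.
Proof.
  intros F_per F_d f_c.
  assert (Hf := is_RInt_derive F f 0 1
    (fun x _ => proj2 (is_derive_Reals F x (f x)) (F_d x))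
    (fun x _ => proj1 (continuity_pt_filterlim f x) (f_c x))).
  eapply is_RInt_eq_value; [exact Hf|].
  rewrite <- (Rplus_0_l 1), F_per; unfold minus, plus, opp; simpl; ring.
Qed.

Lemma is_RInt_01_continuous (f : R -> R) :
  (forall x, continuity_pt f x) -> is_RInt f 0 1 (RInt f 0 1).
Proof.
  intros f_c; apply (RInt_correct (V := R_CompleteNormedModule)).
  apply (ex_RInt_continuous (V := R_CompleteNormedModule)); intros x _.
  now apply continuity_pt_filterlim.
Qed.

Lemma is_RInt_sqr_ge_sqr (f : R -> R) (c S : R) :
  is_RInt f 0 1 c -> is_RInt (fun x => f x * f x) 0 1 S -> c * c <= S.
Proof.
  intros If If2.
  enough (0 <= S - 2 * c * c + c * c) by lra.
  apply (is_RInt_le (fun _ => 0) (fun x => f x * f x - 2 * c * f x + c * c) 0 1);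
    [lra | RInt_rules | RInt_rules |].
  intros x _.
  pose proof (Rle_0_sqr (f x - c)); unfold Rsqr in *; lra.
Qed.

Lemma is_sup_norm_ge V Vb x : is_sup_norm V Vb -> V x <= Vb.
Proof.
  intros [V_ub _].
  apply Rle_trans with (Rabs (V x)); [apply Rle_abs | apply V_ub; now exists x].
Qed.

Lemma rpow_ge0 x g : 0 <= rpow x g.
Proof. unfold rpow; destruct (Rle_dec x 0); [lra | left; apply exp_pos]. Qed.

Lemma mean_le_of_moment_bounds eps K M U S :
  0 < eps <= 1 -> 0 <= K ->
  M + eps * U = 1 -> eps * S <= K * M + U -> U * U <= S -> M <= 1 + K.
Proof.
  intros [eps_pos eps_le1] K_nn mass energy jensen.
  assert (excess_sqr : (1 - M) * (1 - M) <= eps * K * M + (1 - M)).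
  { replace (1 - M) with (eps * U) by lra.
    apply Rle_trans with (eps * (eps * S)).
    - replace (eps * U * (eps * U)) with (eps * (eps * (U * U))) by ring.
      apply Rmult_le_compat_l; [lra|]. apply Rmult_le_compat_l; lra.
    - replace (eps * K * M + eps * U) with (eps * (K * M + U)) by ring.
      apply Rmult_le_compat_l; lra. }
  destruct (Rle_lt_dec M 0) as [M_npos | M_pos]; [lra|].
  assert (excess : M - 1 <= eps * K).
  { apply (Rmult_le_reg_l M); [exact M_pos|]. lra. }
  assert (eps * K <= K) by (rewrite <- (Rmult_1_l K) at 2; apply Rmult_le_compat_r; lra).
  lra.
Qed.

Section Problem1.

Variables (eps : R) (H' u u' u'' m m' m'' : R -> R).
Hypotheses (u_d : forall x, derivable_pt_lim u x (u' x))
  (u'_d : forall x, derivable_pt_lim u' x (u'' x))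
  (u''_c : forall x, continuity_pt u'' x)
  (m_d : forall x, derivable_pt_lim m x (m' x))
  (m'_d : forall x, derivable_pt_lim m' x (m'' x))
  (m''_c : forall x, continuity_pt m'' x)
  (u_per : periodic1 u) (m_per : periodic1 m).
Hypothesis flux_d : forall x, derivable_pt_lim (fun y => H' (u' y) * m y) x
  (m x - m'' x - (1 - eps * (u x - u'' x))).

Let u'_per : periodic1 u' := periodic1_derivative u u' u_per u_d.
Let m'_per : periodic1 m' := periodic1_derivative m m' m_per m_d.

Lemma mass_identity : RInt m 0 1 + eps * RInt u 0 1 = 1.
Proof.
  assert (Im : is_RInt m 0 1 (RInt m 0 1))
    by (apply is_RInt_01_continuous; intro; continuity_rules).
  assert (Iu : is_RInt u 0 1 (RInt u 0 1))
    by (apply is_RInt_01_continuous; intro; continuity_rules).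
  assert (balance : is_RInt (fun x => m x - 1 + eps * u x) 0 1 0).
  { apply (is_RInt_derivative_periodic1 (fun y => H' (u' y) * m y + m' y + eps * u' y)).
    - intro x; unfold periodic1 in *; now rewrite u'_per, m_per, m'_per.
    - intro x; eapply derivable_pt_lim_eq_value; [derive_rules | cbv beta; ring].
    - intro x; continuity_rules. }
  assert (Ibalance : is_RInt (fun x => m x - 1 + eps * u x) 0 1
                       (RInt m 0 1 - 1 + eps * RInt u 0 1)) by RInt_rules.
  apply (is_RInt_unique (V := R_CompleteNormedModule)) in balance, Ibalance. lra.
Qed.

Variables (alpha tC1 Vb : R) (H V : R -> R).
Hypotheses (eps_pos : 0 < eps) (m_pos : forall x, 0 < m x) (V_le : forall x, V x <= Vb)
  (legendre_lower : forall p, - tC1 <= p * H' p - H p)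
  (hjb : forall x, u x - u'' x + H (u' x) + V x = rpow (m x) alpha + eps * (m x - m'' x)).

Lemma energy_inequality :
  eps * RInt (fun x => u x * u x) 0 1 <= (tC1 + Vb) * RInt m 0 1 + RInt u 0 1.
Proof.
  set (density := fun x => u' x * (H' (u' x) * m x) + u x * m x - u x + eps * (u x * u x)
    - m x * u'' x + eps * (m' x * m' x + m x * m'' x + u' x * u' x)).
  assert (Idensity : is_RInt density 0 1 0).
  { apply (is_RInt_derivative_periodic1 (fun y => u y * (H' (u' y) * m y) - m y * u' y
      + m' y * u y + eps * (m y * m' y) + eps * (u y * u' y))).
    - intro x; unfold periodic1 in *; now rewrite u_per, u'_per, m_per, m'_per.
    - intro x; eapply derivable_pt_lim_eq_value; [derive_rules | unfold density; cbv beta; ring].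
    - intro x; unfold density; continuity_rules. }
  assert (density_ge : forall x, - (tC1 + Vb) * m x - u x + eps * (u x * u x) <= density x).
  { (* By the HJB equation, density x minus the lower bound equals
       m (u_x H'(u_x) - H(u_x) + C̃1) + m (Vb - V) + m^(1+α) + ε (m² + m_x² + u_x²). *)
    intro x; unfold density.
    pose proof (m_pos x) as mx_pos.
    assert (0 <= (u' x * H' (u' x) - H (u' x) + tC1) * m x)
      by (apply Rmult_le_pos; [pose proof (legendre_lower (u' x))|]; lra).
    assert (0 <= (Vb - V x) * m x) by (apply Rmult_le_pos; [pose proof (V_le x)|]; lra).
    assert (0 <= m x * rpow (m x) alpha) by (apply Rmult_le_pos; [lra | apply rpow_ge0]).
    assert (0 <= eps * (m x * m x + m' x * m' x + u' x * u' x)).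
    { apply Rmult_le_pos; [lra|].
      pose proof (Rle_0_sqr (m x)); pose proof (Rle_0_sqr (m' x)); pose proof (Rle_0_sqr (u' x)).
      unfold Rsqr in *; lra. }
    assert (m x * (u x - u'' x + H (u' x) + V x - rpow (m x) alpha - eps * (m x - m'' x)) = 0)
      by (rewrite hjb; ring).
    lra. }
  assert (Im : is_RInt m 0 1 (RInt m 0 1))
    by (apply is_RInt_01_continuous; intro; continuity_rules).
  assert (Iu : is_RInt u 0 1 (RInt u 0 1))
    by (apply is_RInt_01_continuous; intro; continuity_rules).
  assert (Iuu : is_RInt (fun x => u x * u x) 0 1 (RInt (fun x => u x * u x) 0 1))
    by (apply is_RInt_01_continuous; intro; continuity_rules).
  assert (lower_le : - (tC1 + Vb) * RInt m 0 1 - RInt u 0 1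
                     + eps * RInt (fun x => u x * u x) 0 1 <= 0).
  { apply (is_RInt_le (fun x => - (tC1 + Vb) * m x - u x + eps * (u x * u x)) density 0 1);
      [lra | RInt_rules | exact Idensity | intros x _; apply density_ge]. }
  lra.
Qed.

End Problem1.

Theorem mainTheorem4 :
  forall (alpha gamma C1 C2 C3 tC1 tC2 tC3 Vb : R),
    0 < alpha -> 1 < gamma ->
    0 < C1 -> 0 < C2 -> 0 < C3 -> 0 < tC1 -> 0 < tC2 -> 0 < tC3 ->
    0 <= Vb ->
  exists C : R, 0 < C /\
    forall (eps : R) (H H' H'' V u u' u'' m m' m'' : R -> R),
      0 < eps -> eps <= 1 ->
      C2_with H H' H'' ->
      (forall p, - C1 + C2 * rpow (Rabs p) gamma <= H p
                 /\ H p <= C1 + C3 * rpow (Rabs p) gamma) ->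
      (forall p, - tC1 + tC2 * rpow (Rabs p) gamma <= p * H' p - H p
                 /\ p * H' p - H p <= tC1 + tC3 * rpow (Rabs p) gamma) ->
      continuity V -> periodic1 V -> is_sup_norm V Vb ->
      C2_with u u' u'' -> periodic1 u ->
      C2_with m m' m'' -> periodic1 m ->
      (forall x, 0 < m x) ->
      (forall x, u x - u'' x + H (u' x) + V x
                 = rpow (m x) alpha + eps * (m x - m'' x)) ->
      (forall x, derivable_pt_lim (fun y => H' (u' y) * m y) x
                   (m x - m'' x - (1 - eps * (u x - u'' x)))) ->
      forall pr : Riemann_integrable m 0 1, RiemannInt pr <= C.
Proof.
  intros alpha gamma C1 C2 C3 tC1 tC2 tC3 Vb _ _ _ _ _ tC1_pos tC2_pos _ Vb_nn.
  exists (1 + (tC1 + Vb)); split; [lra|].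
  intros eps H H' H'' V u u' u'' m m' m'' eps_pos eps_le1 _ _ A2 _ _ V_sup
    [u_d [u'_d u''_c]] u_per [m_d [m'_d m''_c]] m_per m_pos hjb flux_d pr.
  rewrite <- RInt_Reals.
  assert (legendre_lower : forall p, - tC1 <= p * H' p - H p).
  { intro p; destruct (A2 p) as [A2_lower _].
    assert (0 <= tC2 * rpow (Rabs p) gamma) by (apply Rmult_le_pos; [lra | apply rpow_ge0]).
    lra. }
  apply (mean_le_of_moment_bounds eps (tC1 + Vb) _ (RInt u 0 1)
           (RInt (fun x => u x * u x) 0 1)); [lra | lra | | |].
  - eapply mass_identity; eassumption.
  - eapply energy_inequality; try eassumption.
    intro x; now apply (is_sup_norm_ge V).
  - apply (is_RInt_sqr_ge_sqr u); apply is_RInt_01_continuous; intro; continuity_rules.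
Qed.
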